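(* Let $G$ be a graph with vertex set $V=\{v_1,\dots,v_n\}$, and let $G^+$ be the graph with vertex set $V\cup\{v_1^+,\dots,v_n^+\}$ (where the $v_i^+$ are new vertices) and edge set $E(G)\cup\{v_iv_i^+: i=1,\dots,n\}$. Then $G$ is a path graph if and only if $G^+$ is a path graph.
   Context: A graph is a path graph if there are a tree $T$, a collection $\mathcal P$ of paths of $T$ and a bijection $\phi$ from the vertex set of the graph onto $\mathcal P$ such that two vertices $u,v$ are adjacent iff the vertex sets of $\phi(u)$ and $\phi(v)$ intersect. *)

From mathcomp Require Import all_boot.
Set Implicit Arguments. Unset Strict Implicit. Unset Printing Implicit Defensive.

Definition simple_graph (V : finType) (e : rel V) : Prop :=
  symmetric e /\ irreflexive e.

Definition is_tree (T : finType) (t : rel T) : Prop :=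
  [/\ simple_graph t, 0 < #|T|,
      (forall x y : T, connect t x y) &
      (forall s : seq T, uniq s -> 3 <= size s -> ~~ cycle t s)].

Definition is_tree_path (T : finType) (t : rel T) (P : {set T}) : Prop :=
  exists (x : T) (p : seq T),
    [/\ path t x p, uniq (x :: p) & P = [set z in x :: p]].

(* G = (V, e) is a path graph: there are a tree t, a collection of paths
   of t and a bijection phi from V onto it (i.e. an injective map into the
   paths of t) such that distinct u, v are adjacent iff phi u, phi v meet. *)
Definition is_path_graph (V : finType) (e : rel V) : Prop :=
  exists (T : finType) (t : rel T) (phi : V -> {set T}),
    [/\ is_tree t, injective phi,
        (forall v, is_tree_path t (phi v)) &
        (forall u v, u != v -> (e u v <-> phi u :&: phi v != set0))].

(* G^+ : vertex set V + V, where inl v is v and inr v is the new vertex v^+;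
   edges are those of G plus v v^+ for every v. *)
Definition plus_rel (V : finType) (e : rel V) : rel (V + V) :=
  fun a b =>
    match a, b with
    | inl u, inl v => e u v
    | inl u, inr v => u == v
    | inr u, inl v => u == v
    | inr _, inr _ => false
    end.

From mathcomp Require Import all_boot.
Set Implicit Arguments. Unset Strict Implicit. Unset Printing Implicit Defensive.

(* G is the subgraph of G^+ induced by V, and restricting a path
   representation to a subset of the vertices yields one, so only the forward
   direction has content.  Given a tree T and paths P_v representing G, hang a
   new leaf l_v from one end of each P_v.  This keeps T a tree, P_v + l_v is
   again a path, and representing v by P_v + l_v and v^+ by the single vertex
   l_v adds exactly the edges v v^+. *)

Lemma inr_notin_map_inl (T V : eqType) (v : V) (s : seq T) :
  inr v \notin map inl s.
Proof. by apply/negP=> /mapP[]. Qed.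

Section LeafSets.
Variables (T V : finType).
Implicit Types (A B : {set T}) (u v w : V).

Lemma in_leafU_inl A v x : (inl x \in inr v |: inl @: A) = (x \in A).
Proof. by rewrite in_setU1 mem_imset //; exact: inl_inj. Qed.

Lemma in_leafU_inr A v w : (inr w \in inr v |: inl @: A) = (w == v).
Proof. by rewrite in_setU1; case: imsetP => [[]|] //; rewrite orbF. Qed.

Lemma setI_leafU A B u v :
  u != v -> (inr u |: inl @: A) :&: (inr v |: inl @: B) = inl @: (A :&: B).
Proof.
move=> uv; apply/setP=> -[x|w]; rewrite in_setI.
  by rewrite !in_leafU_inl mem_imset ?inE //; exact: inl_inj.
rewrite !in_leafU_inr; case: imsetP => [[]|_] //.
by apply: contraNF uv => /andP[/eqP<- /eqP<-].
Qed.

End LeafSets.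

Lemma pendant_notin_cycle (T : eqType) (e : rel T) (x y : T) (s : seq T) :
    (forall z, e x z || e z x -> z = y) ->
  uniq s -> 3 <= size s -> x \in s -> ~~ cycle e s.
Proof.
move=> pendant + + /rot_to[i q Ds].
rewrite -(rot_uniq i) -(size_rot i) -(rot_cycle i) Ds.
case: q {Ds} => [|a q] //; case/lastP: q => [|q b] //= /andP[_].
rewrite rcons_path last_rcons => /andP[a_notin _] _.
apply/negP => /and3P[xa _ bx].
move: a_notin; rewrite (pendant a) ?xa // (pendant b) ?bx ?orbT //.
by rewrite mem_rcons mem_head.
Qed.

Lemma map_inl_of_no_inr (T V : eqType) (s : seq (T + V)) :
  (forall v, inr v \notin s) -> exists s' : seq T, s = map inl s'.
Proof.
elim: s => [|[x|v] s IHs] no_inr; first by exists [::].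
- have [|s' ->] := IHs; last by exists (x :: s').
  by move=> v; apply: contra (no_inr v); rewrite inE => ->; rewrite orbT.
- by have := no_inr v; rewrite mem_head.
Qed.

Section AddLeaves.

Variables (T V : finType) (t : rel T) (r : V -> T).

Definition add_leaves : rel (T + V) :=
  fun a b => match a, b with
  | inl x, inl y => t x y
  | inl x, inr v | inr v, inl x => x == r v
  | inr _, inr _ => false
  end.

Lemma add_leaves_sym : symmetric t -> symmetric add_leaves.
Proof. by move=> t_sym [x|v] [y|w] //=; rewrite t_sym. Qed.

Lemma add_leaves_irr : irreflexive t -> irreflexive add_leaves.
Proof. by move=> t_irr [x|v] //=; rewrite t_irr. Qed.

Lemma connect_add_leaves x y :
  connect t x y -> connect add_leaves (inl x) (inl y).
Proof.
move=> /connectP[p t_p ->]; apply/connectP; exists (map inl p).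
  by rewrite path_map.
by rewrite last_map.
Qed.

Lemma add_leaves_connected :
    symmetric t -> (forall x y, connect t x y) ->
  forall a b, connect add_leaves a b.
Proof.
move=> t_sym t_conn.
have to_inl a : exists x, connect add_leaves a (inl x).
  by case: a => [x|v]; [exists x | exists (r v); apply: connect1 => /=].
move=> a b; have [x ax] := to_inl a; have [y bx] := to_inl b.
apply: connect_trans ax (connect_trans (connect_add_leaves (t_conn x y)) _).
by rewrite (sym_connect_sym (add_leaves_sym t_sym)).
Qed.

Lemma add_leaves_acyclic :
    (forall s : seq T, uniq s -> 3 <= size s -> ~~ cycle t s) ->
  forall s : seq (T + V), uniq s -> 3 <= size s -> ~~ cycle add_leaves s.
Proof.
move=> t_acyc s Us s3; case: (pickP (fun v => inr v \in s)) => [v sv | no_inr].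
  by apply: (pendant_notin_cycle (y := inl (r v))) sv => // -[x|w] /=;
    rewrite ?orbF ?orbb // => /eqP->.
have [s' Ds] : exists s', s = map inl s'.
  by apply: map_inl_of_no_inr => v; rewrite no_inr.
move: Us s3; rewrite Ds cycle_map size_map (map_inj_uniq (@inl_inj T V)).
exact: t_acyc.
Qed.

Lemma add_leaves_tree : is_tree t -> is_tree add_leaves.
Proof.
case=> [[t_sym t_irr] T_gt0 t_conn t_acyc]; split.
- by split; [exact: add_leaves_sym | exact: add_leaves_irr].
- by rewrite card_sum ltn_addr.
- exact: add_leaves_connected.
- exact: add_leaves_acyclic.
Qed.

Lemma add_leaves_tree_path v (p : seq T) :
    path t (r v) p -> uniq (r v :: p) ->
  is_tree_path add_leaves (inr v |: inl @: [set z in r v :: p]).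
Proof.
move=> t_p Up; exists (inr v), (map inl (r v :: p)); split.
- by rewrite /= eqxx path_map.
- by rewrite cons_uniq inr_notin_map_inl (map_inj_uniq (@inl_inj T V)).
- apply/setP=> -[x|w]; rewrite [RHS]in_set in_cons.
    by rewrite in_leafU_inl (mem_map (@inl_inj T V)) inE.
  by rewrite in_leafU_inr (negbTE (inr_notin_map_inl _ _)) orbF.
Qed.

End AddLeaves.

Lemma path_graph_relpre (W V : finType) (f : W -> V) (e : rel V) :
  injective f -> is_path_graph e -> is_path_graph (relpre f e).
Proof.
move=> f_inj [T [t [phi [t_tree phi_inj phi_path phi_adj]]]].
exists T, t, (phi \o f); split=> //.
- by move=> u v /phi_inj/f_inj.
- by move=> v; apply: phi_path.
- by move=> u v uv; apply: phi_adj; apply: contra uv => /eqP/f_inj->.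
Qed.

Lemma path_graph_plus (V : finType) (e : rel V) :
  is_path_graph e -> is_path_graph (plus_rel e).
Proof.
move=> [T [t [phi [t_tree phi_inj phi_path phi_adj]]]].
have /fin_all_exists[rp phiE] v : exists xp : T * seq T,
    [/\ path t xp.1 xp.2, uniq (xp.1 :: xp.2)
      & phi v = [set z in xp.1 :: xp.2]].
  by have [x [p ?]] := phi_path v; exists (x, p).
pose r v := (rp v).1.
have r_phi v : r v \in phi v by have [_ _ ->] := phiE v; rewrite inE mem_head.
pose psi (a : V + V) :=
  match a with inl v => inr v |: inl @: phi v | inr v => [set inr v] end.
exists (T + V)%type, (add_leaves t r), psi; split.
- exact: add_leaves_tree.
- case=> [u|u] [v|v] /setP psi_uv.
  + by have := psi_uv (inr u); rewrite !in_leafU_inr eqxx => /esym/eqP->.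
  + by have := psi_uv (inl (r u)); rewrite in_leafU_inl r_phi in_set1.
  + by have := psi_uv (inl (r v)); rewrite in_leafU_inl r_phi in_set1.
  + by have := psi_uv (inr u); rewrite !in_set1 eqxx => /esym/eqP[->].
- case=> v /=; first by have [? ? ->] := phiE v; apply: add_leaves_tree_path.
  by exists (inr v), [::]; split=> //; apply/setP=> z; rewrite !inE.
- case=> [u|u] [v|v] uv /=.
  + by rewrite setI_leafU ?imset_eq0 //; exact: phi_adj.
  + by rewrite setI_eq0 disjoint_sym disjoints1 negbK in_leafU_inr eq_sym.
  + by rewrite setI_eq0 disjoints1 negbK in_leafU_inr.
  + rewrite setI_eq0 disjoints1 negbK in_set1 (inj_eq (@inr_inj T V)).
    by rewrite (negbTE (uv : u != v)).
Qed.

Theorem lemma4p2 (V : finType) (e : rel V) :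
  simple_graph e -> (is_path_graph e <-> is_path_graph (plus_rel e)).
Proof.
move=> _; split; first exact: path_graph_plus.
exact: (path_graph_relpre (@inl_inj V V)).
Qed.
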